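(* Let $G=(V,E)$ be any finite simple graph and $\alpha\in\mathbb R$. For any self-avoiding path or cycle $\gamma \subset G$, $$\frac{Z(V \setminus \gamma)}{Z(V)} \leq \left( \frac{1}{1 + e^{- 2 \alpha}} \right)^{ \|\gamma \|/2},$$ where $V\setminus\gamma$ denotes $V$ minus the vertex set of $\gamma$ and $\|\gamma\|$ is the number of edges of $\gamma$.
   Context: For $U\subset V$, consider the subgraph induced by $U$ (vertices $U$, edges of $E$ with both endpoints in $U$). A permutation on $U$ is a bijection $\pi:U\to U$ with $\pi(x)=x$ or $\{x,\pi(x)\}\in E$ for all $x$; $\mathcal S_U$ is the set of them, and $Z(U)=\sum_{\pi\in\mathcal S_U}\exp(-\alpha\sum_{x\in U}\mathbb 1\{\pi(x)\neq x\})$, with $Z(\emptyset)=1$. A self-avoiding path is a finite directed subgraph with vertices enumerated $x^1,\dots,x^n$ and edges $(x^i,x^{i+1})$, $1\le i\le n-1$; a cycle additionally has the edge $(x^n,x^1)$. *)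

From HB Require Import structures.
From mathcomp Require Import all_boot all_order all_algebra fingroup perm.
From mathcomp Require Import reals.
From mathcomp.analysis Require Import sequences exp.
Set Implicit Arguments. Unset Strict Implicit. Unset Printing Implicit Defensive.
Import Order.TTheory GRing.Theory Num.Theory.
Local Open Scope ring_scope.

(* A finite simple graph: vertex set = the finType T, edge relation e,
   assumed symmetric and irreflexive in the theorem. *)

(* pi is a "permutation on U": a bijection of U (encoded as a permutation of T
   fixing every vertex outside U) such that pi x = x or {x, pi x} is an edge. *)
Definition perm_on_graph (T : finType) (e : rel T) (U : {set T}) (pi : {perm T}) : bool :=
  [forall x, (x \notin U) ==> (pi x == x)] &&
  [forall x, (x \in U) ==> ((pi x == x) || e x (pi x))].

Definition Zpart (R : realType) (T : finType) (e : rel T) (alpha : R) (U : {set T}) : R :=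
  \sum_(pi : {perm T} | perm_on_graph e U pi)
     expR (- alpha * (\sum_(x in U) (pi x != x)%:R)).

(* self-avoiding path x^1 ... x^n (n >= 1), with n-1 edges *)
Definition sa_path (T : finType) (e : rel T) (s : seq T) : bool :=
  uniq s && (if s is x :: p then path e x p else false).

(* self-avoiding cycle x^1 ... x^n (n >= 1), edges (x^i,x^{i+1}) and (x^n,x^1);
   it has n edges *)
Definition sa_cycle (T : finType) (e : rel T) (s : seq T) : bool :=
  uniq s && (s != [::]) && path.cycle e s.

From HB Require Import structures.
From mathcomp Require Import all_boot all_order all_algebra fingroup perm.
From mathcomp Require Import reals.
From mathcomp.analysis Require Import sequences exp.
From mathcomp Require Import ring lra.
Import Order.TTheory GRing.Theory Num.Theory.
Local Open Scope ring_scope.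
Set Implicit Arguments. Unset Strict Implicit. Unset Printing Implicit Defensive.

(* Sort the permutations of V by what they do on a piece of gamma:
   those acting as a fixed graph permutation sg of S <= V form a family of weight
   w(sg) Z(V \ S), and families disagreeing at some common vertex are disjoint.
   For a path x1 x2 ..., fixing x1 or swapping it with x2 gives
   Z(V) >= Z(V \ x1) + e^{-2 alpha} Z(V \ {x1, x2}), hence Z(V) >= P_n Z(V \ gamma),
   where P_n = P_{n-1} + e^{-2 alpha} P_{n-2} is the partition function of the path
   itself, and P_n >= (1 + e^{-2 alpha})^{n/2} for n even.  Even cycles are handled
   as paths.  On an odd cycle x1 may also be swapped with its other neighbour,
   and the two rotations of gamma contribute 2 e^{-alpha n}: this extra weight is
   what supplies the missing half power of (1 + e^{-2 alpha}). *)

Lemma ler_sum_subpred (R : numDomainType) (I : finType) (P Q : pred I) (F : I -> R) :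
  subpred P Q -> (forall i, Q i -> 0 <= F i) ->
  \sum_(i | P i) F i <= \sum_(i | Q i) F i.
Proof.
move=> PQ F0; rewrite [X in _ <= X](bigID P) /= -[X in X <= _]addr0.
rewrite (eq_bigl P) => [|i]; last by apply/andb_idl/PQ.
by rewrite lerD2l sumr_ge0 // => i /andP[/F0].
Qed.

Lemma ler_ratio_inv (R : realFieldType) (a b r : R) :
  0 < a -> 0 < r -> r * a <= b -> a / b <= r^-1.
Proof.
move=> a0 r0 rab; have b0 : 0 < b := lt_le_trans (mulr_gt0 r0 a0) rab.
by rewrite ler_pdivrMr // ler_pdivlMl.
Qed.

Lemma powR_inv_half (R : realType) (x : R) k :
  0 < x -> (x^-1) `^ (k%:R / 2) = (Num.sqrt x ^+ k)^-1.
Proof.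
move=> x0; rewrite mulrC powRrM powR12_sqrt ?invr_ge0 ?ltW //.
by rewrite powR_mulrn ?sqrtr_ge0 // sqrtrV ?ltW // exprVn.
Qed.

(* The partition function of the path on n vertices: its graph permutations are
   its matchings, and t stands for the weight e^{-2 alpha} of a transposition. *)
Fixpoint Zpath (R : pzSemiRingType) (t : R) (n : nat) : R :=
  if n is n'.+1 then (if n' is n''.+1 then Zpath t n' + t * Zpath t n'' else 1) else 1.

Lemma ZpathSS (R : pzSemiRingType) (t : R) n :
  Zpath t n.+2 = Zpath t n.+1 + t * Zpath t n.
Proof. by []. Qed.

Arguments Zpath : simpl never.

Section PathCyclePolynomials.
Variable R : realDomainType.
Implicit Types t u : R.

Lemma Zpath_ge0_le t n : 0 <= t -> 0 <= Zpath t n <= Zpath t n.+1.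
Proof.
move=> t0; elim: n => [|n /andP[h0 h1]]; first by rewrite /Zpath lexx ler01.
by rewrite (le_trans h0 h1) ZpathSS lerDl mulr_ge0.
Qed.

Lemma ZpathSS_ge t n : 0 <= t -> (1 + t) * Zpath t n <= Zpath t n.+2.
Proof.
move=> t0; have /andP[_ h] := Zpath_ge0_le n t0.
by rewrite ZpathSS mulrDl mul1r lerD2r.
Qed.

Lemma pow_half_le_Zpath t n : 0 <= t -> (1 + t) ^+ n./2 <= Zpath t n.
Proof.
move=> t0; elim/ltn_ind: n => -[|[|n]] IH; rewrite ?expr0 ?lexx //=.
rewrite exprS; apply: le_trans (ZpathSS_ge n t0).
by rewrite ler_wpM2l ?addr_ge0 // IH.
Qed.

(* For n >= 3, the partition function of the n-cycle with weight u = e^{-alpha}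
   per moved vertex: a given vertex is fixed or swapped with one of its two
   neighbours, or the permutation is one of the two rotations. *)
Definition Zcycle (u : R) (n : nat) : R :=
  Zpath (u ^+ 2) n.-1 + 2 * u ^+ 2 * Zpath (u ^+ 2) n.-2 + 2 * u ^+ n.

Lemma Zcycle3 u : Zcycle u 3 = 1 + 3 * u ^+ 2 + 2 * u ^+ 3.
Proof. by rewrite /Zcycle /= ZpathSS /Zpath; ring. Qed.

Lemma Zcycle_step u j : 0 <= u ->
  (1 + u ^+ 2) * Zcycle u j.*2.+3 <= Zcycle u j.+1.*2.+3.
Proof.
move=> u0; set t := u ^+ 2; have t0 : 0 <= t by rewrite exprn_ge0.
have Zpath_ge_tj k : (j.*2 <= k)%N -> t ^+ j <= Zpath t k.
  move=> jk; apply: le_trans (pow_half_le_Zpath k t0).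
  apply: le_trans (_ : (1 + t) ^+ j <= _).
    by rewrite lerXn2r ?nnegrE ?addr_ge0 // lerDr.
  by rewrite ler_weXn2l ?lerDl // -(half_double j) half_leq.
rewrite /Zcycle /= !ZpathSS.
have uE k : u ^+ (k + j.*2)%N = t ^+ j * u ^+ k by rewrite -mul2n exprD exprM mulrC.
rewrite (uE 3%N : u ^+ j.*2.+3 = _) (uE 5%N : u ^+ j.+1.*2.+3 = _).
(* The difference of the two sides is t B + 2 t^2 A - 2 u^3 t^j, where
   A = Zpath t (2j) and B = Zpath t (2j+1) are both at least t^j. *)
have key : 0 <= t ^+ j * u ^+ 2 * (1 - 2 * u + 2 * u ^+ 2).
  have -> : 1 - 2 * u + 2 * u ^+ 2 = (1 - u) ^+ 2 + u ^+ 2 by ring.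
  by rewrite !mulr_ge0 ?exprn_ge0 ?addr_ge0 ?sqr_ge0.
have hB := ler_wpM2l t0 (Zpath_ge_tj _ (leqnSn _)).
have hA := ler_wpM2l (exprn_ge0 2 t0) (Zpath_ge_tj _ (leqnn _)).
move: key hA hB; rewrite /t; lra.
Qed.

Lemma Zcycle_odd_ge_pow u j :
  0 <= u -> (1 + u ^+ 2) ^+ j * Zcycle u 3 <= Zcycle u j.*2.+3.
Proof.
move=> u0; elim: j => [|j IH]; first by rewrite mul1r.
rewrite exprS -mulrA; apply: le_trans (Zcycle_step j u0).
by rewrite ler_wpM2l // addr_ge0 ?sqr_ge0.
Qed.

End PathCyclePolynomials.

Section SqrtBounds.
Variable R : rcfType.
Implicit Types t u x : R.

Lemma sqrt_pow_le x m k : 1 <= x -> (m <= k.*2)%N -> Num.sqrt x ^+ m <= x ^+ k.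
Proof.
move=> x1 mk; have x0 : 0 <= x := le_trans ler01 x1.
rewrite -[x in _ <= x ^+ _](sqr_sqrtr x0) -exprM mul2n ler_weXn2l //.
by rewrite -sqrtr1 ler_sqrt.
Qed.

Lemma sqrt_pow_le_Zpath t m n :
  0 <= t -> (m <= n./2.*2)%N -> Num.sqrt (1 + t) ^+ m <= Zpath t n.
Proof.
move=> t0 mn; apply: le_trans (pow_half_le_Zpath n t0).
by apply: sqrt_pow_le => //; rewrite lerDl.
Qed.

Lemma sqrt_pow_le_Zcycle u j :
  0 <= u -> Num.sqrt (1 + u ^+ 2) ^+ j.*2.+3 <= Zcycle u j.*2.+3.
Proof.
move=> u0; set s := Num.sqrt _.
have s0 : 0 <= s := sqrtr_ge0 _.
have s2 : s ^+ 2 = 1 + u ^+ 2 by rewrite sqr_sqrtr // addr_ge0 ?sqr_ge0.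
apply: le_trans (Zcycle_odd_ge_pow j u0).
rewrite -addn3 exprD -mul2n exprM s2 ler_wpM2l ?exprn_ge0 ?addr_ge0 ?sqr_ge0 // Zcycle3.
rewrite -(ler_pXn2r (_ : 0 < 2)%N) ?nnegrE ?addr_ge0 ?mulr_ge0 ?exprn_ge0 //.
rewrite -exprM mulnC exprM s2.
have : 0 <= 3 * u ^+ 2 + 4 * u ^+ 3 + 6 * u ^+ 4 + 12 * u ^+ 5 + 3 * u ^+ 6.
  by rewrite !addr_ge0 // mulr_ge0 // exprn_ge0.
lra.
Qed.

End SqrtBounds.

Definition cycle_perm (T : finType) (c : seq T) (Uc : uniq c) : {perm T} :=
  perm (can_inj (prev_next Uc)).

Lemma cycle_permE (T : finType) (c : seq T) (Uc : uniq c) x :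
  cycle_perm Uc x = next c x.
Proof. by rewrite permE. Qed.

Lemma permM_split (T : finType) (S : {set T}) (rho sg : {perm T}) x :
  perm_on (~: S) rho -> perm_on S sg ->
  (rho * sg)%g x = if x \in S then sg x else rho x.
Proof.
move=> rhoS sgS; rewrite permM; case: ifPn => xS.
  by rewrite (out_perm rhoS) // inE negbK.
by rewrite (out_perm sgS) // -in_setC (perm_closed _ rhoS) inE.
Qed.

Section PartitionFunction.
Variables (R : realType) (T : finType) (e : rel T) (alpha : R).
Hypotheses (e_sym : symmetric e) (e_irr : irreflexive e).

Local Notation Z := (Zpart e alpha).
Local Notation u := (expR (- alpha)).
Implicit Types (U S : {set T}) (pi sg rho : {perm T}) (x y : T) (q c : seq T).
Implicit Types (a b : {set T} * {perm T}) (F : seq ({set T} * {perm T})).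

Definition perm_weight (U : {set T}) (pi : {perm T}) : R :=
  expR (- alpha * \sum_(x in U) (pi x != x)%:R).

Lemma ZpartE U : Z U = \sum_(pi | perm_on_graph e U pi) perm_weight U pi.
Proof. by []. Qed.

Lemma perm_weight_ge0 U pi : 0 <= perm_weight U pi.
Proof. exact: expR_ge0. Qed.

Lemma perm_weight1 U : perm_weight U 1 = 1.
Proof. by rewrite /perm_weight big1 ?mulr0 ?expR0 // => x _; rewrite perm1 eqxx. Qed.

Lemma perm_weight_derange U pi :
  {in U, forall x, pi x != x} -> perm_weight U pi = u ^+ #|U|.
Proof.
move=> moved; rewrite /perm_weight (eq_bigr (fun _ => 1)) => [|x /moved -> //].
by rewrite sumr_const -expRM_natr.
Qed.

Lemma perm_on_graphP U pi :
  reflect (perm_on U pi /\ {in U, forall x, (pi x == x) || e x (pi x)})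
          (perm_on_graph e U pi).
Proof.
apply: (iffP andP) => [[/forallP fixU /forallP edgeU] | [onU edgeU]]; split.
- by apply/subsetP => x; rewrite inE; apply: contraR => /(implyP (fixU x)).
- by move=> x; apply/implyP.
- by apply/forallP => x; apply/implyP => /(out_perm onU) ->.
- by apply/forallP => x; apply/implyP/edgeU.
Qed.

Lemma perm_on_graph1 U : perm_on_graph e U 1.
Proof. by apply/perm_on_graphP; split=> [|x _]; rewrite ?perm_on1 ?perm1 ?eqxx. Qed.

Lemma perm_on_graph_tperm x y : e x y -> perm_on_graph e [set x; y] (tperm x y).
Proof.
move=> exy; apply/perm_on_graphP; split=> [|v]; first exact: tperm_on.
by rewrite !inE => /orP[]/eqP->; rewrite ?tpermL ?tpermR -?(e_sym x) exy orbT.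
Qed.

Lemma perm_weight_tperm x y : x != y -> perm_weight [set x; y] (tperm x y) = u ^+ 2.
Proof.
move=> xy; rewrite perm_weight_derange ?cards2 ?xy // => v.
by rewrite !inE => /orP[]/eqP->; rewrite ?tpermL ?tpermR // eq_sym.
Qed.

Section CyclePerm.
Variables (c : seq T) (Uc : uniq c).
Hypothesis c_edge : {in c, forall x, e x (next c x)}.

Lemma perm_on_graph_cycle : perm_on_graph e [set:: c] (cycle_perm Uc).
Proof.
apply/perm_on_graphP; split=> [|x].
  apply/subsetP => x; rewrite !inE cycle_permE; apply: contraR => xc.
  by rewrite next_nth (negbTE xc).
by rewrite inE cycle_permE => /c_edge ->; rewrite orbT.
Qed.

Lemma perm_weight_cycle : perm_weight [set:: c] (cycle_perm Uc) = u ^+ size c.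
Proof.
rewrite perm_weight_derange => [|x]; first by rewrite cardsE (card_uniqP Uc).
by rewrite inE cycle_permE => /c_edge; apply: contraTneq => ->; rewrite e_irr.
Qed.

End CyclePerm.

Lemma Zpart_gt0 U : 0 < Z U.
Proof.
rewrite ZpartE (bigD1 1%g) ?perm_on_graph1 //= perm_weight1.
by rewrite ltr_pwDl ?ltr01 ?sumr_ge0 // => pi _; apply: perm_weight_ge0.
Qed.

(* A family is a pair (S, sg) with sg a graph permutation of S; pi belongs to it
   when it extends sg. *)
Definition extends a pi : bool :=
  [forall x in a.1, pi x == a.2 x].

Definition incompatible a b : bool :=
  [exists x in a.1 :&: b.1, a.2 x != b.2 x].

Lemma incompatible_at a b x :
  x \in a.1 -> x \in b.1 -> a.2 x != b.2 x -> incompatible a b.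
Proof. by move=> xa xb neq; apply/exists_inP; exists x; rewrite ?inE ?xa. Qed.

Lemma incompatible_extends a b pi :
  incompatible a b -> extends b pi -> ~~ extends a pi.
Proof.
case/exists_inP=> x /setIP[xa xb] neq /forall_inP/(_ x xb)/eqP pib.
by apply/forall_inP => /(_ x xa)/eqP pia; rewrite -pia pib eqxx in neq.
Qed.

Lemma perm_on_graphM U S sg rho :
  S \subset U -> perm_on_graph e S sg -> perm_on_graph e (U :\: S) rho ->
  [/\ perm_on_graph e U (rho * sg)%g, extends (S, sg) (rho * sg)%g
    & perm_weight U (rho * sg)%g = perm_weight S sg * perm_weight (U :\: S) rho].
Proof.
move=> SU /perm_on_graphP[sgS sg_e] /perm_on_graphP[rhoUS rho_e].
have rhoS : perm_on (~: S) rho.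
  by apply: subset_trans rhoUS _; rewrite setDE subsetIr.
have rhosgE := permM_split _ rhoS sgS.
split.
- apply/perm_on_graphP; split=> [|x xU].
    apply/subsetP => x; rewrite inE rhosgE; apply: contraR => xU.
    have xS : x \notin S by apply: contra xU; apply: (subsetP SU).
    by rewrite (negbTE xS) (out_perm rhoUS) ?inE ?(negbTE xU) ?andbF ?eqxx.
  by rewrite rhosgE; case: ifPn => xS; [exact: sg_e | apply: rho_e; rewrite inE xS].
- by apply/forall_inP => x xS; rewrite rhosgE xS.
- rewrite /perm_weight -expRD -mulrDr (big_setID S) /= (setIidPr SU).
  congr (expR (- alpha * _)); congr (_ + _); apply: eq_bigr => x; rewrite rhosgE.
    by move=> ->.
  by case/setDP=> _ /negbTE ->.
Qed.

Lemma Zpart_extends_ge U S sg : S \subset U -> perm_on_graph e S sg ->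
  perm_weight S sg * Z (U :\: S) <=
    \sum_(pi | perm_on_graph e U pi && extends (S, sg) pi) perm_weight U pi.
Proof.
(* Reindex by pi = rho * sg, rho ranging over the graph permutations of U \ S. *)
move=> SU sgS; rewrite ZpartE mulr_sumr [X in _ <= X](reindex_inj (mulIg sg)) /=.
rewrite (eq_bigr (fun rho => perm_weight U (rho * sg)%g)) => [|rho]; last first.
  by case/(perm_on_graphM SU sgS) => _ _ ->.
apply: ler_sum_subpred => [rho|rho _]; last exact: perm_weight_ge0.
by case/(perm_on_graphM SU sgS) => -> ->.
Qed.

Lemma sum_extends_le (f : {perm T} -> R) (Q : pred {perm T}) F :
  (forall pi, 0 <= f pi) -> pairwise incompatible F ->
  \sum_(a <- F) \sum_(pi | Q pi && extends a pi) f pi <= \sum_(pi | Q pi) f pi.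
Proof.
move=> f0; elim: F Q => [|a F IH] Q /=; first by rewrite big_nil sumr_ge0.
case/andP=> /allP aF pF; rewrite big_cons [X in _ <= X](bigID (extends a)) lerD2l /=.
apply: le_trans (IH (fun pi => Q pi && ~~ extends a pi) pF).
rewrite big_seq [X in _ <= X]big_seq; apply: ler_sum => b bF.
apply: ler_sum_subpred => [pi /andP[Qpi bpi]|pi _]; last exact: f0.
by rewrite Qpi bpi (incompatible_extends (aF b bF)).
Qed.

Lemma Zpart_ge_families U F : pairwise incompatible F ->
  all (fun a => (a.1 \subset U) && perm_on_graph e a.1 a.2) F ->
  \sum_(a <- F) perm_weight a.1 a.2 * Z (U :\: a.1) <= Z U.
Proof.
move=> pF /allP FU; rewrite [X in _ <= X]ZpartE.
apply: le_trans (sum_extends_le _ (@perm_weight_ge0 U) pF).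
rewrite big_seq [X in _ <= X]big_seq; apply: ler_sum => -[S sg] /FU /andP[SU sgS].
exact: Zpart_extends_ge.
Qed.

Lemma Zpart_setD_le U S : S \subset U -> Z (U :\: S) <= Z U.
Proof.
move=> SU; have := @Zpart_ge_families U [:: (S, 1%g)] isT.
by rewrite /= SU perm_on_graph1 big_seq1 perm_weight1 mul1r; apply.
Qed.

Lemma Zpart_ge_edge U x y : x \in U -> y \in U -> e x y ->
  Z (U :\ x) + u ^+ 2 * Z (U :\: [set x; y]) <= Z U.
Proof.
move=> xU yU exy; have xy : x != y by apply: contraTneq exy => ->; rewrite e_irr.
have := @Zpart_ge_families U [:: ([set x], 1%g); ([set x; y], tperm x y)].
rewrite /= !big_cons big_nil addr0 /= perm_weight1 mul1r perm_weight_tperm //; apply.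
  by rewrite andbT (@incompatible_at _ _ x) /= ?perm1 ?tpermL ?inE ?eqxx // eq_sym.
by rewrite perm_on_graph1 perm_on_graph_tperm // sub1set xU subUset !sub1set xU yU.
Qed.

Lemma Zpart_ge_path U q : uniq q -> sorted e q -> {subset q <= U} ->
  Zpath (u ^+ 2) (size q) * Z (U :\: [set:: q]) <= Z U.
Proof.
have [n] := ubnP (size q); elim: n q U => // n IH [|x [|y r]] U /= size_q.
- by rewrite set_nil setD0 mul1r.
- by move=> _ _ /(_ x (mem_head _ _)) xU; rewrite set_seq1 mul1r Zpart_setD_le ?sub1set.
case/andP=> xr Ur /andP[exy yr] qU.
have yrU : {subset y :: r <= U :\ x}.
  move=> v vr; have /qU vU : v \in [:: x, y & r] by rewrite inE vr orbT.
  by rewrite !inE vU andbT; apply: contraNneq xr => <-.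
have rU : {subset r <= U :\: [set x; y]}.
  move=> v vr; have /qU vU : v \in [:: x, y & r] by rewrite !inE vr !orbT.
  rewrite !inE vU andbT negb_or; apply/andP; split.
    by apply: contraNneq xr => <-; rewrite inE vr orbT.
  by apply: contraNneq (andP Ur).1 => <-.
have IH1 := IH (y :: r) (U :\ x) size_q Ur yr yrU.
have IH2 := IH r (U :\: [set x; y]) (ltnW size_q) (andP Ur).2 (path_sorted yr) rU.
rewrite setDDl -set_cons in IH1; rewrite setDDl -setUA -!set_cons in IH2.
rewrite ZpathSS mulrDl -mulrA; apply: le_trans (Zpart_ge_edge _ _ exy); last 2 first.
- by apply: qU; rewrite mem_head.
- by apply: qU; rewrite !inE eqxx orbT.
by rewrite lerD // ler_wpM2l ?exprn_ge0 ?expR_ge0.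
Qed.

Lemma cycle_families_incompatible c x (Uc : uniq c) (Urc : uniq (rev c)) :
  path.cycle e c -> x \in c -> next c x != prev c x ->
  pairwise incompatible
    [:: ([set x], 1%g); ([set x; next c x], tperm x (next c x));
        ([set x; prev c x], tperm x (prev c x));
        ([set:: c], cycle_perm Uc); ([set:: rev c], cycle_perm Urc)].
Proof.
move=> ec xc yz.
have xy : x != next c x by apply: contraTneq (next_cycle ec xc) => <-; rewrite e_irr.
have xz : x != prev c x by apply: contraTneq (prev_cycle ec xc) => <-; rewrite e_irr.
set y := next c x in yz xy *; set z := prev c x in yz xz *.
have ny : next c y != x by rewrite -(next_prev Uc x) (can_eq (prev_next Uc)).
have pz : prev c z != x by rewrite -(prev_next Uc x) (can_eq (next_prev Uc)) eq_sym.
have yc : y \in c by rewrite mem_next.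
have zc : z \in c by rewrite mem_prev.
have permE' v : cycle_perm Urc v = prev c v by rewrite cycle_permE next_rev.
(* Any two families disagree at x, except the two sending x to y (resp. z),
   which disagree at y (resp. z). *)
rewrite /= !andbT; do 9?[apply/andP; split];
  [| | | | | apply: (@incompatible_at _ _ y) | | | apply: (@incompatible_at _ _ z) |];
  try apply: (@incompatible_at _ _ x);
  by rewrite /= ?permE' ?cycle_permE ?inE ?mem_rev ?eqxx ?orbT ?perm1 ?tpermL ?tpermR
       // eq_sym.
Qed.

Lemma Zpart_ge_cycle U c x : uniq c -> path.cycle e c -> {subset c <= U} -> x \in c ->
  next c x != prev c x ->
  Z (U :\ x) + u ^+ 2 * Z (U :\: [set x; next c x])
    + u ^+ 2 * Z (U :\: [set x; prev c x])
    + 2 * u ^+ size c * Z (U :\: [set:: c]) <= Z U.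
Proof.
move=> Uc ec cU xc yz; have Urc : uniq (rev c) by rewrite rev_uniq.
have next_e : {in c, forall v, e v (next c v)} by move=> v; apply: next_cycle.
have prev_e : {in rev c, forall v, e v (next (rev c) v)}.
  by move=> v; rewrite mem_rev next_rev // e_sym; apply: prev_cycle.
have crev : [set:: rev c] = [set:: c] by apply/setP => v; rewrite !inE mem_rev.
have xy : x != next c x by apply: contraTneq (next_e x xc) => <-; rewrite e_irr.
have xz : x != prev c x by apply: contraTneq (prev_cycle ec xc) => <-; rewrite e_irr.
have cU' : [set:: c] \subset U by apply/subsetP => v; rewrite inE; apply: cU.
apply: le_trans (Zpart_ge_families (cycle_families_incompatible Uc Urc ec xc yz) _).
  rewrite !big_cons big_nil /= perm_weight1 !perm_weight_tperm // !perm_weight_cycle //.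
  by rewrite size_rev crev; lra.
rewrite /= perm_on_graph1 !perm_on_graph_tperm ?perm_on_graph_cycle ?next_e //;
  last by rewrite e_sym prev_cycle.
by rewrite crev cU' !andbT !subUset !sub1set !cU ?mem_next ?mem_prev.
Qed.

Lemma Zpart_ge_path_setD U s q : uniq (s ++ q) -> sorted e q -> {subset s ++ q <= U} ->
  Zpath (u ^+ 2) (size q) * Z (U :\: [set:: s ++ q]) <= Z (U :\: [set:: s]).
Proof.
rewrite cat_uniq => /and3P[_ sq Uq] qs sqU.
have -> : [set:: s ++ q] = [set:: s] :|: [set:: q].
  by apply/setP => v; rewrite !inE mem_cat.
rewrite -setDDl; apply: Zpart_ge_path => // v vq.
rewrite !inE sqU ?mem_cat ?vq ?orbT // andbT; apply: contra sq => vs.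
by apply/hasP; exists v.
Qed.

Lemma Zpart_ge_Zcycle U x y m z (c := [:: x, y & rcons m z]) :
  uniq c -> path.cycle e c -> {subset c <= U} ->
  Zcycle u (size c) * Z (U :\: [set:: c]) <= Z U.
Proof.
move=> Uc ec cU; have [xq /andP[yq _]] := andP Uc.
have := ec; rewrite /c /= rcons_path => /andP[_ /andP[pyz _]].
have pym : path e y m by move: pyz; rewrite rcons_path => /andP[].
have nx : next c x = y by rewrite /c /next /= eqxx.
have px : prev c x = z.
  by have := cycle_prev Uc; rewrite {1}/c /= rcons_path last_rcons => /and3P[_ _ /eqP].
have yz : y != z by apply: contraNneq yq => ->; rewrite mem_rcons mem_head.
have := Zpart_ge_cycle Uc ec cU (mem_head _ _); rewrite nx px => /(_ yz) hZ.
(* Removing x and z from c leaves the path y :: m. *)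
have cxz : perm_eq c [:: x, z, y & m].
  rewrite perm_cons perm_sym (perm_catCA [:: z] [:: y] m) /=.
  by rewrite perm_cons perm_sym perm_rcons.
have Uxz : uniq [:: x, z, y & m] by rewrite -(perm_uniq cxz).
have sU : {subset [:: x, z, y & m] <= U}.
  by move=> v; rewrite -(perm_mem cxz); apply: cU.
have cxzE : [set:: [:: x, z, y & m]] = [set:: c].
  by apply/setP => v; rewrite !in_set (perm_mem cxz).
have := Zpart_ge_path_setD (s := [:: x]) Uc pyz cU.
have := Zpart_ge_path_setD (s := [:: x; y]) Uc (path_sorted pyz) cU.
have := Zpart_ge_path_setD (s := [:: x; z]) (q := y :: m) Uxz pym sU.
rewrite /= -/c cxzE !size_rcons (set_cons x [:: y]) (set_cons x [:: z]) !set_seq1.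
have sc : size c = (size m).+3 by rewrite /c /= size_rcons.
rewrite /Zcycle sc /= in hZ * => h3 h2 h1.
have t0 : 0 <= u ^+ 2 by rewrite exprn_ge0 ?expR_ge0.
have := ler_wpM2l t0 h2; have := ler_wpM2l t0 h3.
lra.
Qed.

Lemma Zpart_ge_sqrt_path U s : sa_path e s -> {subset s <= U} ->
  Num.sqrt (1 + u ^+ 2) ^+ (size s).-1 * Z (U :\: [set:: s]) <= Z U.
Proof.
case/andP=> Us ps sU; have ss : sorted e s by move: ps; case: (s).
apply: le_trans (Zpart_ge_path Us ss sU); apply: ler_wpM2r; first exact/ltW/Zpart_gt0.
apply: sqrt_pow_le_Zpath; first by rewrite exprn_ge0 ?expR_ge0.
by rewrite halfK; case: odd; rewrite ?subn1 ?subn0 ?leq_pred.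
Qed.

Lemma Zpart_ge_sqrt_cycle U s : sa_cycle e s -> {subset s <= U} ->
  Num.sqrt (1 + u ^+ 2) ^+ size s * Z (U :\: [set:: s]) <= Z U.
Proof.
case/andP=> /andP[Us _] cs sU; have u0 : 0 <= u := expR_ge0 _.
have [odd_s | even_s] := boolP (odd (size s)); last first.
  have ss : sorted e s.
    by move: cs; case: (s) => // x p; rewrite /= rcons_path => /andP[].
  apply: le_trans (Zpart_ge_path Us ss sU); apply: ler_wpM2r; first exact/ltW/Zpart_gt0.
  by apply: sqrt_pow_le_Zpath; rewrite ?exprn_ge0 ?even_halfK.
move: Us cs sU odd_s; case: s => [|x [|y p]] //=; first by rewrite e_irr.
case/lastP: p => [|m z] //; rewrite size_rcons /= negbK => Uc cc cU even_m.
apply: le_trans (Zpart_ge_Zcycle Uc cc cU); apply: ler_wpM2r; first exact/ltW/Zpart_gt0.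
by rewrite /= size_rcons -(even_halfK even_m); apply: sqrt_pow_le_Zcycle.
Qed.

End PartitionFunction.

Theorem proposition3p1 (R : realType) (T : finType) (e : rel T)
  (e_sym : symmetric e) (e_irr : irreflexive e) (alpha : R) (s : seq T) :
  (sa_path e s ->
     Zpart e alpha (~: [set x in s]) / Zpart e alpha [set: T]
       <= ((1 + expR (-2 * alpha))^-1) `^ ((size s).-1%:R / 2)) /\
  (sa_cycle e s ->
     Zpart e alpha (~: [set x in s]) / Zpart e alpha [set: T]
       <= ((1 + expR (-2 * alpha))^-1) `^ ((size s)%:R / 2)).
Proof.
have t0 : 0 < 1 + expR (-2 * alpha) by rewrite ltr_pwDl ?expR_ge0.
have r0 k : 0 < Num.sqrt (1 + expR (-2 * alpha)) ^+ k by rewrite exprn_gt0 ?sqrtr_gt0.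
have sT : {subset s <= [set: T]} by move=> x; rewrite inE.
have u2 : expR (-2 * alpha) = expR (- alpha) ^+ 2 by rewrite -expRM_natl mulNr mulrN.
rewrite !powR_inv_half // -setTD.
split=> hs; apply: ler_ratio_inv (Zpart_gt0 _ _ _) (r0 _) _.
  by rewrite u2; apply: Zpart_ge_sqrt_path.
by rewrite u2; apply: Zpart_ge_sqrt_cycle.
Qed.
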